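(* Let $A=\{p_1,\ldots,p_n\}$ be a pseudo-instance of the Pinwheel Scheduling problem (a finite multiset of positive real periods) with $p_i\ge 2$ for all $i$ and density $\rho(A)=\sum_i 1/p_i\le 7/12$. Apply to $A$ the algorithm of Chan and Chin described in the context (specialization with respect to $\{2,3\}$ followed by normalization), producing multisets $B'$ and $C'$ of positive integers. Then the Pinwheel Scheduling instance $B'\cup C'$ is schedulable.
   Context: Pinwheel Scheduling (PS): an instance is a finite multiset of positive integer periods $q_1,\ldots,q_n$ (one per job). A schedule assigns at most one job to each day $1,2,3,\ldots$ (perpetually); it is feasible if every job $i$ is scheduled at least once in every window of $q_i$ consecutive days. The instance is schedulable if a feasible schedule exists. A pseudo-instance is a multiset of positive reals $p_i$; its density is $\rho(A)=\sum_i 1/p_i$, and the density of any multiset $X$ of periods is $\rho(X)=\sum_{p\in X}1/p$ (with $\rho(\emptyset)=0$). Specialization: specializing a multiset of periods with respect to $\{x\}$ ($x$ a positive integer) means rounding each period down to the largest element of $\{x2^j: j\ge 0 \text{ integer}\}$ not exceeding it. The algorithm: split $A=A_2\cup A_3$, where $A_2=\{p_i: 2\cdot 2^j\le p_i<3\cdot 2^j \text{ for some integer } j\ge 0\}$ and $A_3=\{p_i: 3\cdot 2^j\le p_i<2\cdot 2^{j+1}\text{ for some integer } j\ge 0\}$. Let $B$ be the specialization of $A_2$ with respect to $\{2\}$ and $C$ the specialization of $A_3$ with respect to $\{3\}$. Let $r=\lfloor 2\rho(B)\rfloor$ and $s=\lfloor 3\rho(C)\rfloor$, and choose sub-multisets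 $P\subseteq B$, $Q\subseteq C$ with $\rho(B\setminus P)=r/2$ and $\rho(C\setminus Q)=s/3$, so that $\rho(B)=r/2+\rho(P)$ with $0\le\rho(P)<1/2$ and $\rho(C)=s/3+\rho(Q)$ with $0\le \rho(Q)<1/3$. If $\rho(P)+\rho(Q)=0$, set $B'=B$, $C'=C$. Otherwise apply normalization: (a) if $\tfrac43\rho(P)+\rho(Q)\le \tfrac13$: specialize $P$ with respect to $\{3\}$ and move it from $B$ to $C$; (b) if $\tfrac13<\tfrac43\rho(P)+\rho(Q)\le\tfrac23$ and $\rho(P)+\tfrac32\rho(Q)\le\tfrac12$: specialize $Q$ with respect to $\{2\}$ and move it from $C$ to $B$; (c) if $\tfrac13<\tfrac43\rho(P)+\rho(Q)\le\tfrac23$ and $\rho(P)+\tfrac32\rho(Q)>\tfrac12$: specialize $P$ with respect to $\{3\}$ and move it from $B$ to $C$; (d) if $\tfrac43\rho(P)+\rho(Q)>\tfrac23$: make no change. $B'$ and $C'$ denote $B$ and $C$ after normalization. *)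

From HB Require Import structures.
From mathcomp Require Import all_boot all_order all_algebra.
From mathcomp Require Import reals.
Set Implicit Arguments. Unset Strict Implicit. Unset Printing Implicit Defensive.
Import Order.TTheory GRing.Theory Num.Theory.
Local Open Scope ring_scope.

(* Multisets are represented by sequences (order irrelevant). *)

Definition rhoR {R : realType} (A : seq R) : R := \sum_(p <- A) p^-1.

Definition rhoN {R : realType} (X : seq nat) : R := \sum_(q <- X) (q%:R)^-1.

(* A schedule is f : nat -> nat, day d is given to job
   f d (if f d >= size I, the day is idle), so at most one job per day. *)
Definition schedulable (I : seq nat) : Prop :=
  exists f : nat -> nat,
    forall i, (i < size I)%N -> forall t, (1 <= t)%N ->
      exists d, (t <= d < t + nth 0%N I i)%N /\ f d = i.

Definition is_spec {R : realType} (x : nat) (p : R) (q : nat) : Prop :=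
  (exists j : nat, q = (x * 2 ^ j)%N) /\ (q%:R <= p) /\
  (forall j : nat, ((x * 2 ^ j)%N)%:R <= p -> (x * 2 ^ j <= q)%N).

Definition spec_seq {R : realType} (x : nat) (A : seq R) (B : seq nat) : Prop :=
  size A = size B /\
  forall i, (i < size A)%N -> is_spec x (nth 0 A i) (nth 0%N B i).

Definition spec_seqN {R : realType} (x : nat) (A : seq nat) (B : seq nat) : Prop :=
  @spec_seq R x (map (fun q : nat => q%:R) A) B.

Definition in_A2 {R : realType} (p : R) : Prop :=
  exists j : nat, ((2 * 2 ^ j)%N)%:R <= p /\ p < ((3 * 2 ^ j)%N)%:R.
Definition in_A3 {R : realType} (p : R) : Prop :=
  exists j : nat, ((3 * 2 ^ j)%N)%:R <= p /\ p < ((2 * 2 ^ j.+1)%N)%:R.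

(* The normalization step: given B, C, the chosen split B = P + Bk
   (Bk = B \ P) and C = Q + Ck (Ck = C \ Q), (B', C') is a possible
   output of normalization. *)
Definition normalization {R : realType}
    (B C P Bk Q Ck B' C' : seq nat) : Prop :=
  let rP : R := rhoN P in
  let rQ : R := rhoN Q in
  (rP + rQ = 0 /\ B' = B /\ C' = C) \/
      (rP + rQ != 0 /\ 4/3 * rP + rQ <= 1/3 /\
        exists P', @spec_seqN R 3 P P' /\ B' = Bk /\ C' = C ++ P') \/
      (rP + rQ != 0 /\ 1/3 < 4/3 * rP + rQ /\ 4/3 * rP + rQ <= 2/3 /\
        rP + 3/2 * rQ <= 1/2 /\
        exists Q', @spec_seqN R 2 Q Q' /\ B' = B ++ Q' /\ C' = Ck) \/
      (rP + rQ != 0 /\ 1/3 < 4/3 * rP + rQ /\ 4/3 * rP + rQ <= 2/3 /\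
        1/2 < rP + 3/2 * rQ /\
        exists P', @spec_seqN R 3 P P' /\ B' = Bk /\ C' = C ++ P') \/
      (rP + rQ != 0 /\ 2/3 < 4/3 * rP + rQ /\ B' = B /\ C' = C).

From HB Require Import structures.
From mathcomp Require Import all_boot all_order all_algebra.
From mathcomp Require Import reals.
From mathcomp Require Import zify ring lra.
Import Order.TTheory GRing.Theory Num.Theory.
Set Implicit Arguments. Unset Strict Implicit. Unset Printing Implicit Defensive.

(* After normalization, B' consists of periods 2 2^e and C' of periods 3 2^e.
   Periods K 2^e of density at most 1 can be served by pairwise disjoint residue
   classes: pairs of longest periods K 2^(T+1) merge into one period K 2^T, and
   a residue class modulo K 2^T splits into two classes modulo K 2^(T+1).
   Rounding the periods 3 2^e down to 2 2^e multiplies their density by 3/2, so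
   B' ++ C' is schedulable when rho(B') = 0 and rho(C') <= 1, or when
   rho(B') + 3/2 rho(C') <= 1.  Specialization w.r.t. {2} (resp. {3}) raises
   densities by a factor less than 3/2 (resp. 4/3), so 8 rho(B) + 9 rho(C) <= 7;
   as rho(B \ P) = r/2 and rho(C \ Q) = s/3 for integers r and s, a case
   analysis on r, s and on the normalization rule yields one of the two bounds. *)

Definition residue_schedulable (I : seq nat) : Prop :=
  exists m c : nat -> nat,
    (forall i, i < size I -> 0 < m i <= nth 0 I i) /\
    (forall i j d, i < size I -> j < size I ->
       d = c i %[mod m i] -> d = c j %[mod m j] -> i = j).

(* [c + m * t - t] is [c - t] shifted by a multiple of [m] to avoid truncation. *)
Lemma residue_in_window m c t : 0 < m -> exists2 d, t <= d < t + m & d = c %[mod m].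
Proof.
move=> m_gt0; exists (t + (c + m * t - t) %% m).
  by rewrite leq_addr ltn_add2l ltn_pmod.
rewrite modnDmr (_ : t + _ = t * m + c) ?modnMDl //.
by rewrite mulnC; nia.
Qed.

Lemma residue_schedulable_schedulable I : residue_schedulable I -> schedulable I.
Proof.
case=> m [c [mP disj]].
exists (fun d => find (fun i => d == c i %[mod m i]) (iota 0 (size I))).
move=> i ltiI t _; have /andP [m_gt0 m_le] := mP i ltiI.
have [d /andP [ge_dt lt_dt] dE] := residue_in_window (c i) t m_gt0.
exists d; split; first by rewrite ge_dt (leq_trans lt_dt) ?leq_add2l.
set p := fun j => d == c j %[mod m j].
have has_p : has p (iota 0 (size I)) by apply/hasP; exists i; rewrite ?mem_iota //; apply/eqP.
have := nth_find 0 has_p; rewrite has_find size_iota in has_p.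
rewrite nth_iota // add0n => /eqP dEj.
exact: disj _ _ d has_p ltiI dEj dE.
Qed.

Lemma residue_schedulable_perm I J : residue_schedulable I -> perm_eq I J ->
  residue_schedulable J.
Proof.
case=> m [c [mP disj]] pIJ.
have /(perm_iotaP 0) [Is pIs ->] : perm_eq J I by rewrite perm_sym.
exists (fun j => m (nth 0 Is j)), (fun j => c (nth 0 Is j)).
have ltI j : j < size Is -> nth 0 Is j < size I.
  by move=> ltj; have := mem_nth 0 ltj; rewrite (perm_mem pIs) mem_iota.
have uIs : uniq Is by rewrite (perm_uniq pIs) iota_uniq.
rewrite size_map; split=> [j ltj | i j d lti ltj di dj].
  by rewrite (nth_map 0) //; apply: mP (ltI _ ltj).
by apply/eqP; rewrite -(nth_uniq 0 lti ltj uIs); apply/eqP; apply: disj di dj; apply: ltI.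
Qed.

Lemma residue_schedulable_behead q I : residue_schedulable (q :: I) -> residue_schedulable I.
Proof.
case=> m [c [mP disj]]; exists (fun i => m i.+1), (fun i => c i.+1).
split=> [i | i j d lti ltj di dj]; first exact: (mP i.+1).
by case: (disj i.+1 j.+1 d lti ltj di dj).
Qed.

Lemma residue_schedulable_le I J : residue_schedulable I -> size I = size J ->
  (forall i, i < size I -> nth 0 I i <= nth 0 J i) -> residue_schedulable J.
Proof.
case=> m [c [mP disj]] sizeIJ leIJ; exists m, c; rewrite -sizeIJ; split=> // i ltiI.
by have /andP [-> /leq_trans -> //] := mP i ltiI; apply: leIJ.
Qed.

Lemma residue_schedulable_split q I : residue_schedulable (q :: I) ->
  residue_schedulable [:: 2 * q, 2 * q & I].
Proof.
case=> m [c [mP disj]]; have /andP [m0_gt0 m0_le] := mP 0 isT.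
pose m' i := if i is k.+2 then m k.+1 else 2 * m 0.
pose c' i := match i with 0 => c 0 | 1 => c 0 + m 0 | k.+2 => c k.+1 end.
have old_class i d : d = c' i %[mod m' i] -> d = c i.-1 %[mod m i.-1].
  case: i => [|[|k]] //= dE;
  by rewrite -(modn_dvdm d (dvdn_mull 2 (dvdnn (m 0)))) dE modn_dvdm ?dvdn_mull ?modnDr.
have no_clash d : d = c 0 %[mod 2 * m 0] -> d = c 0 + m 0 %[mod 2 * m 0] -> False.
  move=> -> /eqP; rewrite -{1}[c 0]addn0 eqn_modDl mod0n modn_small; last by lia.
  by rewrite eq_sym gtn_eqF.
exists m', c'; split=> [[|[|k]] /= ltk | i j d /= lti ltj di dj].
1,2: by rewrite muln_gt0 m0_gt0 leq_mul2l m0_le.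
  exact: (mP k.+1).
have : i.-1 = j.-1 by apply: disj (old_class i d di) (old_class j d dj) => /=; lia.
case: i j {lti ltj} di dj => [|[|i]] [|[|j]] //= di dj; by [case: (no_clash d) | move=> ->].
Qed.

Lemma residue_schedulable_double k q I : residue_schedulable (nseq k q ++ I) ->
  residue_schedulable (nseq (2 * k) (2 * q) ++ I).
Proof.
elim: k I => [|k IHk] I // schedI.
have /IHk schedI' : residue_schedulable (nseq k q ++ q :: I).
  by apply: (residue_schedulable_perm schedI); rewrite /= -cat1s perm_catCA.
have /residue_schedulable_split : residue_schedulable (q :: nseq (2 * k) (2 * q) ++ I).
  by apply: (residue_schedulable_perm schedI'); rewrite -cat1s perm_catCA.
by rewrite mulnS.
Qed.

Lemma residue_schedulable_merge n q I : residue_schedulable (nseq (uphalf n) q ++ I) ->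
  residue_schedulable (nseq n (2 * q) ++ I).
Proof.
move/residue_schedulable_double; rewrite (_ : 2 * uphalf n = odd n + n).
  by rewrite nseqD -catA; case: (odd n) => //; apply: residue_schedulable_behead.
by rewrite uphalf_half -{3}(odd_double_half n) -muln2; lia.
Qed.

Lemma residue_schedulable_small K I : size I <= K -> all (leq K) I -> residue_schedulable I.
Proof.
move=> sizeI /(all_nthP 0) geK; exists (fun _ => K), id; split=> [i ltiI | i j d lti ltj].
  by rewrite geK // andbT; lia.
by move=> ->; rewrite !modn_small ?(leq_trans lti sizeI) ?(leq_trans ltj sizeI).
Qed.

(* The weight condition is the density bound sum_e 1/(K 2^e) <= 1 multiplied by
   K 2^T; the induction merges the longest periods K 2^T.+1 in pairs. *)
Lemma residue_schedulable_pow2 K T L : 0 < K -> all (leq^~ T) L ->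
  \sum_(e <- L) 2 ^ (T - e) <= K * 2 ^ T ->
  residue_schedulable [seq K * 2 ^ e | e <- L].
Proof.
move=> K_gt0; elim: T L => [|T IHT] L leLT.
  rewrite (eq_bigr (fun=> 1)) => [|e _]; last by rewrite sub0n.
  rewrite sum1_size muln1 => sizeL.
  apply: (@residue_schedulable_small K); rewrite ?size_map //.
  by rewrite all_map; apply/allP => e _; apply: leq_pmulr; rewrite expn_gt0.
set n := count_mem T.+1 L; set L' := filter (predC (pred1 T.+1)) L.
have permL : perm_eq (nseq n T.+1 ++ L') L.
  have <- : filter (pred1 T.+1) L = nseq n T.+1.
    by rewrite /n -size_filter; apply/all_pred1P; rewrite filter_all.
  by rewrite perm_filterC.
have leL'T : all (leq^~ T) L'.
  apply/allP => e; rewrite mem_filter => /andP [/= neq_eT Le].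
  by have := allP leLT e Le; rewrite /= leq_eqVlt (negbTE neq_eT).
have weightL : \sum_(e <- L) 2 ^ (T.+1 - e) = n + 2 * \sum_(e <- L') 2 ^ (T - e).
  rewrite -(perm_big _ permL) big_cat big_nseq subnn expn0 iter_addn_0 mul1n.
  rewrite big_distrr /=.
  congr (_ + _); rewrite !big_seq; apply: eq_bigr => e /(allP leL'T) le_eT.
  by rewrite subSn // expnS.
rewrite weightL; set S := \sum_(e <- L') _ => weight_le.
have : residue_schedulable [seq K * 2 ^ e | e <- nseq (uphalf n) T ++ L'].
  apply: IHT; first by rewrite all_cat leL'T all_nseq /= leqnn orbT.
  have -> : \sum_(e <- nseq (uphalf n) T ++ L') 2 ^ (T - e) = uphalf n + S.
    by rewrite big_cat big_nseq subnn expn0 iter_addn_0 mul1n.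
  move: weight_le (odd_double_half n); rewrite expnS mulnCA uphalf_half.
  by case: (odd n) => /=; lia.
rewrite map_cat map_nseq => /residue_schedulable_merge.
rewrite mulnCA -expnS -(map_nseq _ (fun e => K * 2 ^ e)) -map_cat.
move=> /residue_schedulable_perm; apply.
exact: perm_map.
Qed.

Definition pow2_multiples (K : nat) (X : seq nat) : Prop :=
  forall x, x \in X -> exists e, x = K * 2 ^ e.

Lemma pow2_multiplesP K X : pow2_multiples K X -> exists L, X = [seq K * 2 ^ e | e <- L].
Proof.
elim: X => [|x X IHX] KX; first by exists [::].
have [e ->] := KX x (mem_head x X).
have [L ->] : exists L, X = [seq K * 2 ^ e | e <- L].
  by apply: IHX => y Xy; apply: KX; rewrite in_cons Xy orbT.
by exists (e :: L).
Qed.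

Lemma pow2_multiples_cat K X Y : pow2_multiples K X -> pow2_multiples K Y ->
  pow2_multiples K (X ++ Y).
Proof. by move=> KX KY y; rewrite mem_cat => /orP [/KX | /KY]. Qed.

Lemma pow2_multiples_perm_cat K X Y Z : pow2_multiples K X -> perm_eq X (Y ++ Z) ->
  pow2_multiples K Y /\ pow2_multiples K Z.
Proof.
move=> KX pX; split=> y yin; apply: KX; by rewrite (perm_mem pX) mem_cat yin ?orbT.
Qed.

Local Open Scope ring_scope.

Section Density.
Variable R : realType.
Local Notation rho := (@rhoN R).

Lemma rhoN_cat X Y : rho (X ++ Y) = rho X + rho Y.
Proof. by rewrite /rhoN big_cat. Qed.

Lemma rhoN_perm X Y : perm_eq X Y -> rho X = rho Y.
Proof. by move=> pXY; rewrite /rhoN (perm_big _ pXY). Qed.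

Lemma rhoN_ge0 X : 0 <= rho X.
Proof. by apply: sumr_ge0 => q _; rewrite invr_ge0. Qed.

Lemma rhoN_eq0 X : 0%N \notin X -> rho X = 0 -> X = [::].
Proof.
case: X => [|q X] // /norP [q_neq0 _]; rewrite /rhoN big_cons => rho0; exfalso.
have := rhoN_ge0 X; have : 0 < (q%:R : R)^-1 by rewrite invr_gt0 ltr0n lt0n eq_sym.
rewrite /rhoN; lra.
Qed.

Lemma rhoN_pow2 K T L : (0 < K)%N -> all (leq^~ T) L ->
  rho [seq K * 2 ^ e | e <- L]%N * (K * 2 ^ T)%:R = (\sum_(e <- L) 2 ^ (T - e))%:R.
Proof.
move=> K_gt0 leLT; rewrite /rhoN big_map mulr_suml natr_sum !big_seq.
apply: eq_bigr => e /(allP leLT) le_eT.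
rewrite -[in (K * 2 ^ T)%N](subnKC le_eT) expnD mulnA (natrM _ (K * 2 ^ e)) mulKf //.
by rewrite pnatr_eq0 -lt0n muln_gt0 K_gt0 expn_gt0.
Qed.

Lemma pow2_multiples_residue_schedulable K X : (0 < K)%N -> pow2_multiples K X ->
  rho X <= 1 -> residue_schedulable X.
Proof.
move=> K_gt0 /pow2_multiplesP [L ->] rho_le1.
have leLT : all (leq^~ (\max_(e <- L) e)) L.
  by apply/allP => e Le; apply: leq_bigmax_seq.
apply: (residue_schedulable_pow2 K_gt0 leLT).
rewrite -(ler_nat R) -(rhoN_pow2 K_gt0 leLT) ler_piMl //.
Qed.

Lemma rhoN_pow2_3_2 L :
  rho [seq 3 * 2 ^ e | e <- L]%N = 2 / 3 * rho [seq 2 * 2 ^ e | e <- L]%N.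
Proof.
rewrite /rhoN !big_map mulr_sumr; apply: eq_bigr => e _.
have : (2 ^ e)%:R != 0 :> R by rewrite pnatr_eq0 -lt0n expn_gt0.
by rewrite !natrM; move=> ?; field.
Qed.

Lemma split_schedulable X Y : pow2_multiples 2 X -> pow2_multiples 3 Y ->
  (rho X = 0 /\ rho Y <= 1) \/ rho X + 3 / 2 * rho Y <= 1 -> schedulable (X ++ Y).
Proof.
move=> X2 Y3 [[rhoX0 rhoY_le1] | rho_le1]; apply: residue_schedulable_schedulable.
  have X0 : 0%N \notin X by apply/negP => /X2 [e] /eqP; rewrite eq_sym muln_eq0 expn_eq0.
  by rewrite (rhoN_eq0 X0 rhoX0); apply: pow2_multiples_residue_schedulable Y3 rhoY_le1.
have [[L1 XE] [L2 YE]] := (pow2_multiplesP X2, pow2_multiplesP Y3).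
have : residue_schedulable [seq 2 * 2 ^ e | e <- L1 ++ L2]%N.
  apply: (pow2_multiples_residue_schedulable (K := 2%N)) => // [x /mapP [e _ ->] | ].
    by exists e.
  by rewrite map_cat rhoN_cat -XE; move: rho_le1; rewrite YE rhoN_pow2_3_2; lra.
move/residue_schedulable_le; apply; rewrite XE YE map_cat !size_cat !size_map // => i lti.
rewrite !nth_cat !size_map; case: ifP => // /negbT; rewrite -leqNgt => leL1i.
have ltiL2 : (i - size L1 < size L2)%N by lia.
by rewrite !(nth_map 0%N) // leq_mul2r ltnW ?orbT.
Qed.

Lemma is_spec_inv_le x j k (a : R) b : (0 < x)%N ->
  (x * 2 ^ j)%:R <= a <= k * (x * 2 ^ j)%:R -> is_spec x a b -> b%:R^-1 <= k * a^-1.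
Proof.
move=> x_gt0 /andP [le_ua le_ak] [[j' ->] [_ max_b]].
have pos_pow i : 0 < (x * 2 ^ i)%:R :> R by rewrite ltr0n muln_gt0 x_gt0 expn_gt0.
have le_ub : (x * 2 ^ j)%:R <= (x * 2 ^ j')%:R :> R by rewrite ler_nat max_b.
have a_gt0 : 0 < a by apply: lt_le_trans le_ua.
have k_ge0 : 0 <= k.
  by rewrite -(pmulr_lge0 _ (pos_pow j)); apply: le_trans le_ak; exact: ltW.
rewrite ler_pdivlMr // ler_pdivrMl // mulrC.
exact: le_trans le_ak (ler_wpM2l k_ge0 le_ub).
Qed.

Lemma rhoN_spec_le x k (A : seq R) B : spec_seq x A B ->
  (forall a b, a \in A -> is_spec x a b -> b%:R^-1 <= k * a^-1) -> rho B <= k * rhoR A.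
Proof.
move=> [sizeAB specAB] le_ab; rewrite /rhoN /rhoR mulr_sumr.
rewrite [X in X <= _](big_nth 0%N) [X in _ <= X](big_nth 0) -sizeAB.
apply: ler_sum_nat => i /andP [_ lti].
exact: le_ab (mem_nth 0 lti) (specAB i lti).
Qed.

Lemma spec_seq_pow2_multiples x (A : seq R) B : spec_seq x A B -> pow2_multiples x B.
Proof.
move=> [sizeAB specAB] b /(nthP 0%N) [i ltiB <-].
have [[j ->] _] := specAB i (leq_trans ltiB (eq_leq (esym sizeAB))); by exists j.
Qed.

Lemma rhoN_spec_A2 A B : (forall p, p \in A -> in_A2 p) -> spec_seq 2 A B ->
  rho B <= 3 / 2 * rhoR A.
Proof.
move=> A2 sAB; apply: rhoN_spec_le sAB _ => a b /A2 [j [le_a lt_a]].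
by apply: (is_spec_inv_le (j := j)) => //; move: lt_a; rewrite le_a !natrM /=; lra.
Qed.

Lemma rhoN_spec_A3 A C : (forall p, p \in A -> in_A3 p) -> spec_seq 3 A C ->
  rho C <= 4 / 3 * rhoR A.
Proof.
move=> A3 sAC; apply: rhoN_spec_le sAC _ => a c /A3 [j [le_a lt_a]].
by apply: (is_spec_inv_le (j := j)) => //; move: lt_a; rewrite le_a expnS !natrM /=; lra.
Qed.

Lemma rhoR_map_natr (X : seq nat) : rhoR [seq q%:R : R | q <- X] = rho X.
Proof. by rewrite /rhoR /rhoN big_map. Qed.

Lemma rhoN_spec_2to3 P P' : pow2_multiples 2 P -> @spec_seqN R 3 P P' ->
  rho P' <= 4 / 3 * rho P.
Proof.
move=> P2; rewrite /spec_seqN -(rhoR_map_natr P) => sPP'.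
apply: rhoN_spec_le sPP' _ => _ b /mapP [q /P2 [e ->] ->].
case: e => [|i] spec_b.
  have [[j ->] [le_b _]] := spec_b; move: le_b; rewrite ler_nat.
  by have := expn_gt0 2 j; lia.
apply: (is_spec_inv_le (j := i)) spec_b => //.
have : 0 <= (2 ^ i)%:R :> R := ler0n _ _.
by rewrite expnS !natrM => ?; apply/andP; split; lra.
Qed.

Lemma rhoN_spec_3to2 Q Q' : pow2_multiples 3 Q -> @spec_seqN R 2 Q Q' ->
  rho Q' <= 3 / 2 * rho Q.
Proof.
move=> Q3; rewrite /spec_seqN -(rhoR_map_natr Q) => sQQ'.
apply: rhoN_spec_le sQQ' _ => _ b /mapP [q /Q3 [e ->] ->].
apply: (is_spec_inv_le (j := e)) => //; have : 0 <= (2 ^ e)%:R :> R := ler0n _ _.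
by rewrite !natrM => ?; apply/andP; split; lra.
Qed.

Lemma intr_cases3 (z : int) : 0 <= z%:~R :> R -> z%:~R < 3 :> R ->
  [\/ z%:~R = 0 :> R, z%:~R = 1 :> R | z%:~R = 2 :> R].
Proof.
rewrite ler0z => z_ge0 lt3; have {lt3} lt3 : (z < 3)%R by rewrite -(ltr_int R).
have : z = 0 \/ z = 1 \/ z = 2 by lia.
by case=> [->|[->|->]]; [constructor 1 | constructor 2 | constructor 3].
Qed.

Lemma normalization_schedulable (r s : int) B C P Bk Q Ck B' C' :
  pow2_multiples 2 B -> pow2_multiples 3 C ->
  perm_eq B (P ++ Bk) -> perm_eq C (Q ++ Ck) ->
  rho Bk = r%:~R / 2 -> rho Ck = s%:~R / 3 -> 3 * rho C < s%:~R + 1 ->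
  8 * rho B + 9 * rho C <= 7 ->
  @normalization R B C P Bk Q Ck B' C' -> schedulable (B' ++ C').
Proof.
move=> B2 C3 pB pC rhoBk rhoCk ltC leBC; rewrite /normalization /=.
have [[P2 Bk2] [Q3 Ck3]] := (pow2_multiples_perm_cat B2 pB, pow2_multiples_perm_cat C3 pC).
have [[[gP gQ] gBk] gCk] := (rhoN_ge0 P, rhoN_ge0 Q, rhoN_ge0 Bk, rhoN_ge0 Ck).
rewrite (rhoN_perm pB) (rhoN_perm pC) !rhoN_cat in ltC leBC.
have r012 : [\/ r%:~R = 0 :> R, r%:~R = 1 :> R | r%:~R = 2 :> R].
  by apply: intr_cases3; lra.
have s012 : [\/ s%:~R = 0 :> R, s%:~R = 1 :> R | s%:~R = 2 :> R].
  by apply: intr_cases3; lra.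
have pq_pos : rho P + rho Q != 0 -> 0 < rho P + rho Q.
  by rewrite lt0r => ->; rewrite addr_ge0.
case=> [[pq0 [-> ->]] | [[/pq_pos pq_gt0 [a_le [P' [sP' [-> ->]]]]] |
  [[/pq_pos pq_gt0 [b_gt [b_le [b_le' [Q' [sQ' [-> ->]]]]]]] |
  [[/pq_pos pq_gt0 [c_gt [c_le [c_gt' [P' [sP' [-> ->]]]]]]] |
  [/pq_pos pq_gt0 [d_gt [-> ->]]]]]]];
  [ apply: split_schedulable B2 C3 _
  | have rhoP' := rhoN_spec_2to3 P2 sP';
    apply: split_schedulable Bk2 (pow2_multiples_cat C3 (spec_seq_pow2_multiples sP')) _
  | have rhoQ' := rhoN_spec_3to2 Q3 sQ';
    apply: split_schedulable (pow2_multiples_cat B2 (spec_seq_pow2_multiples sQ')) Ck3 _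
  | have rhoP' := rhoN_spec_2to3 P2 sP';
    apply: split_schedulable Bk2 (pow2_multiples_cat C3 (spec_seq_pow2_multiples sP')) _
  | apply: split_schedulable B2 C3 _ ].
all: rewrite ?rhoN_cat ?(rhoN_perm pB) ?(rhoN_perm pC) ?rhoN_cat.
all: by case: r012 => er; case: s012 => es; first [left; split; lra | right; lra].
Qed.

End Density.

Theorem theorem1 (R : realType) (A : seq R)
    (A2 A3 : seq R) (B C P Bk Q Ck B' C' : seq nat) :
  (* A is a pseudo-instance with all periods >= 2 and density <= 7/12 *)
  (forall p, p \in A -> 2 <= p) ->
  rhoR A <= 7 / 12 ->
  (* split A = A2 + A3 *)
  perm_eq A (A2 ++ A3) ->
  (forall p, p \in A2 -> in_A2 p) ->
  (forall p, p \in A3 -> in_A3 p) ->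
  (* B, C are the specializations of A2 w.r.t. {2} and A3 w.r.t. {3} *)
  spec_seq 2 A2 B ->
  spec_seq 3 A3 C ->
  (* chosen sub-multisets P of B and Q of C, with rho(B\P) = r/2, rho(C\Q) = s/3 *)
  perm_eq B (P ++ Bk) ->
  perm_eq C (Q ++ Ck) ->
  @rhoN R Bk = (Num.floor (2 * @rhoN R B))%:~R / 2 ->
  @rhoN R Ck = (Num.floor (3 * @rhoN R C))%:~R / 3 ->
  (* B', C' result from normalization *)
  @normalization R B C P Bk Q Ck B' C' ->
  schedulable (B' ++ C').
Proof.
(* The bound p >= 2 is already implied by membership in A2 or A3. *)
move=> _ rhoA pA A2P A3P sB sC pB pC rhoBk rhoCk.
apply: normalization_schedulable (spec_seq_pow2_multiples sB) (spec_seq_pow2_multiples sC)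
  pB pC rhoBk rhoCk _ _.
  by have := lt_succ_floor (3 * @rhoN R C); rewrite intrD.
have := rhoN_spec_A2 A2P sB; have := rhoN_spec_A3 A3P sC.
have : rhoR A = rhoR A2 + rhoR A3 by rewrite /rhoR (perm_big _ pA) big_cat.
lra.
Qed.
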